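(* Let $\|\cdot\|$ be a norm on $\mathbb{R}^d$. For each integer $m>2$ let $E_m=\{T\subseteq\mathbb{R}^d\mid |T|=m \text{ and } T \text{ contains two points } x,y \text{ with } \|x-y\|=1\}$ and $\mathcal{G}_m=(\mathbb{R}^d,E_m)$. Then $\chi(\mathcal{G}_m)=\chi((\mathbb{R}^d,\|\cdot\|),1)$ for all such $m$.
   Context: $\chi((\mathbb{R}^d,\|\cdot\|),1)$ denotes the chromatic number of the unit distance graph of $(\mathbb{R}^d,\|\cdot\|)$, i.e. the graph on $\mathbb{R}^d$ whose edges are the pairs $\{x,y\}$ with $\|x-y\|=1$. A hypergraph $(V,E)$ has edges that are subsets of $V$ of size at least $2$; a proper coloring makes no edge monochromatic; $\chi$ is the least number of colors of a proper coloring. *)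

From HB Require Import structures.
From mathcomp Require Import all_boot all_order all_algebra.
From mathcomp Require Import boolp classical_sets reals.
Set Implicit Arguments. Unset Strict Implicit. Unset Printing Implicit Defensive.
Import Order.TTheory GRing.Theory Num.Theory.
Local Open Scope ring_scope.

Definition is_norm (R : realType) (d : nat) (N : 'rV[R]_d -> R) : Prop :=
  [/\ (forall x, N x = 0 -> x = 0),
      (forall (a : R) x, N (a *: x) = `|a| * N x) &
      (forall x y, N (x + y) <= N x + N y)].

Definition hproper_coloring (V : Type) (E : set (set V)) (k : nat)
  (c : V -> 'I_k) : Prop :=
  forall e, E e -> exists x y, e x /\ e y /\ c x <> c y.

Definition hcolorable (V : Type) (E : set (set V)) (k : nat) : Prop :=
  exists c : V -> 'I_k, hproper_coloring E c.

Definition hchromatic_number (V : Type) (E : set (set V)) (n : nat) : Prop :=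
  hcolorable E n /\ forall k, (k < n)%N -> ~ hcolorable E k.

Definition has_card (V : eqType) (T : set V) (m : nat) : Prop :=
  exists s : seq V, [/\ uniq s, size s = m & forall x, T x <-> x \in s].

Definition Em (R : realType) (d : nat) (N : 'rV[R]_d -> R) (m : nat)
  : set (set 'rV[R]_d) :=
  [set T | has_card T m /\ exists x y, [/\ T x, T y & N (x - y) = 1]].

Definition unit_coloring (R : realType) (d : nat) (N : 'rV[R]_d -> R)
  (k : nat) (c : 'rV[R]_d -> 'I_k) : Prop :=
  forall x y, N (x - y) = 1 -> c x <> c y.

Definition unit_colorable (R : realType) (d : nat) (N : 'rV[R]_d -> R)
  (k : nat) : Prop := exists c, unit_coloring N (k:=k) c.

Definition unit_chromatic_number (R : realType) (d : nat)
  (N : 'rV[R]_d -> R) (n : nat) : Prop :=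
  unit_colorable N n /\ forall k, (k < n)%N -> ~ unit_colorable N k.

From HB Require Import structures.
From mathcomp Require Import all_boot all_order all_algebra.
From mathcomp Require Import boolp classical_sets reals cardinality filter.
Set Implicit Arguments. Unset Strict Implicit. Unset Printing Implicit Defensive.
Import Order.TTheory GRing.Theory Num.Theory.
Local Open Scope classical_set_scope.
Local Open Scope ring_scope.

(* A coloring of the unit distance graph is a proper coloring of E_m.
   Conversely, in a proper coloring c of E_m a color class containing a unit
   pair has fewer than m points. Fix v = x0 - y0 for a unit pair x0, y0 and an
   ultrafilter U on nat refining the cofinite filter, and recolor x by the
   U-limit of the colors c (x + j v). If a unit pair x, y got the same limit
   color i, then for some j the unit pair x + j v, y + j v has color i, while
   the class of i contains the infinitely many points x + j v, for j in a
   U-large set. *)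

Lemma ultra_fiber (T : Type) (K : finType) (F : set_system T) (f : T -> K) :
  UltraFilter F -> exists k, F (f @^-1` [set k]).
Proof.
move=> F_ultra; apply: contrapT => no_fiber.
have F_avoid k : F (~` (f @^-1` [set k])).
  have [Fk|//] := in_ultra_setVsetC (f @^-1` [set k]) F_ultra.
  by case: no_fiber; exists k.
have [x /(_ (f x))] := filter_ex (filter_forall _ F_avoid).
by apply.
Qed.

Lemma eventually_setC_finite (A : set nat) : finite_set A -> \oo (~` A).
Proof.
move=> /finite_seqP[s ->]; exists (\max_(j <- s) j).+1 => // n /= s_lt_n ns.
by move: s_lt_n; rewrite ltnNge (@leq_bigmax_seq _ s xpredT id n ns isT).
Qed.

Lemma filter_eventually_infinite (F : set_system nat) (A : set nat) :
  ProperFilter F -> \oo `<=` F -> F A -> infinite_set A.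
Proof.
move=> F_proper ooF FA /eventually_setC_finite/ooF FAC.
by have [n []] := filter_ex (filterI FA FAC).
Qed.

Lemma infinite_set_extend_seq (T : eqType) (A : set T) n (s : seq T) :
  infinite_set A -> uniq s -> (forall z, z \in s -> A z) ->
  exists s', [/\ uniq s', size s' = (size s + n)%N, {subset s <= s'} &
                 forall z, z \in s' -> A z].
Proof.
move=> A_inf; elim: n s => [|n IH] s s_uniq sA.
  by exists s; rewrite addn0; split.
have [z [Az zNs]] := infinite_setN0 (infinite_setD A_inf (finite_seq s)).
have zs_uniq : uniq (z :: s) by rewrite /= s_uniq andbT; apply/negP.
have zsA w : w \in z :: s -> A w by rewrite in_cons => /predU1P[->|/sA].
have [s' [s'_uniq s'_size zs_s' s'A]] := IH _ zs_uniq zsA.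
exists s'; split => //; first by rewrite s'_size addSnnS.
by move=> w ws; apply: zs_s'; rewrite in_cons ws orbT.
Qed.

Lemma shift_nat_inj (R : numFieldType) (V : lmodType R) (x v : V) :
  v != 0 -> injective (fun j : nat => x + j%:R *: v).
Proof.
move=> v_neq0 i j /addrI/eqP; rewrite -subr_eq0 -scalerBl scaler_eq0 !subr_eq0.
by rewrite (negbTE v_neq0) orbF eqr_nat => /eqP.
Qed.

Section UnitDistanceHypergraph.
Variables (R : realType) (d : nat) (N : 'rV[R]_d -> R) (m k : nat).
Implicit Types (x y : 'rV[R]_d) (c : 'rV[R]_d -> 'I_k).

Lemma is_norm0 : is_norm N -> N 0 = 0.
Proof. by move=> [_ NZ _]; have := NZ 0 0; rewrite scale0r normr0 mul0r. Qed.

Lemma unit_dist_neq x y : N 0 = 0 -> N (x - y) = 1 -> x != y.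
Proof.
by move=> N0; apply: contra_eq_neq => ->; rewrite subrr N0 eq_sym oner_neq0.
Qed.

Lemma unit_coloring_hproper_Em c :
  unit_coloring N c -> hproper_coloring (Em N m) c.
Proof.
move=> c_unit T [_ [x [y [Tx Ty Nxy]]]].
by exists x, y; split; last split; last exact: c_unit.
Qed.

Lemma hproper_Em_class_finite c x y :
  (1 < m)%N -> hproper_coloring (Em N m) c ->
  x != y -> N (x - y) = 1 -> c x = c y -> finite_set (c @^-1` [set c x]).
Proof.
move=> m_gt1 c_proper xy Nxy cxy; apply: contrapT => class_inf.
have xy_uniq : uniq [:: x; y] by rewrite /= inE xy.
have xy_class z : z \in [:: x; y] -> c z = c x by rewrite !inE => /orP[]/eqP->.
have [s [s_uniq s_size xy_s s_class]] :=
  infinite_set_extend_seq (m - 2)%N class_inf xy_uniq xy_class.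
have [|a [b [sa [sb cab]]]] := c_proper [set z | z \in s].
  split; first by exists s; split => //; rewrite s_size subnKC.
  by exists x, y; split => //; apply: xy_s; rewrite !inE eqxx ?orbT.
by apply: cab; rewrite (s_class a sa) (s_class b sb).
Qed.

Lemma hcolorable_Em_unit_colorable : N 0 = 0 -> (1 < m)%N ->
  hcolorable (Em N m) k -> unit_colorable N k.
Proof.
move=> N0 m_gt1 [c c_proper].
have [[x0 [y0 Nxy0]]|no_unit] := pselect (exists x y, N (x - y) = 1);
  last by exists c => x y Nxy; case: no_unit; exists x, y.
pose shift x (j : nat) := x + j%:R *: (x0 - y0).
have shift_inj x : injective (shift x).
  by apply: shift_nat_inj; rewrite subr_eq0; apply: unit_dist_neq Nxy0.
have [U [U_ultra ooU]] := ultraFilterLemma eventually_filter.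
pose limit_color x := projT1 (cid (ultra_fiber (c \o shift x) U_ultra)).
exists limit_color => x y Nxy.
rewrite /limit_color; case: cid => i Ux; case: cid => i' Uy /= ii'; subst i'.
have [j [/= cxj cyj]] := filter_ex (filterI Ux Uy).
have Nxyj : N (shift x j - shift y j) = 1 by rewrite opprD addrACA subrr addr0.
have := hproper_Em_class_finite m_gt1 c_proper (unit_dist_neq N0 Nxyj) Nxyj
  (etrans cxj (esym cyj)).
rewrite cxj => /(finite_preimage (in2W (shift_inj x))).
exact: filter_eventually_infinite Ux.
Qed.

End UnitDistanceHypergraph.

Theorem corollary4p4p1 (R : realType) (d : nat) (N : 'rV[R]_d -> R)
  (hN : is_norm N) (m : nat) (hm : (2 < m)%N) (n : nat) :
  hchromatic_number (Em N m) n <-> unit_chromatic_number N n.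
Proof.
have colorable_eq : hcolorable (Em N m) = unit_colorable N.
  apply/funext => k; apply/propext; split.
    exact: hcolorable_Em_unit_colorable (is_norm0 hN) (ltnW hm).
  by move=> [c c_unit]; exists c; apply: unit_coloring_hproper_Em.
by rewrite /hchromatic_number colorable_eq.
Qed.
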